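(* For all positive integers $k$ and $n$ with $n\ge 2$, the cycle $C_{2n}$ is a strict prime $k$th-power distance graph. Furthermore, the labels in a strict prime $k$th-power distance labeling of $C_{2n}$ may be chosen arbitrarily large: for every integer $M$ there is such a labeling all of whose labels exceed $M$.
   Context: A strict prime $k$th-power distance labeling of a graph $G$ is an injective map $L:V(G)\to\mathbb{Z}$ such that for every edge $uv$ of $G$, $|L(u)-L(v)|=p^k$ for some prime $p$ (the prime may depend on the edge); $G$ is a strict prime $k$th-power distance graph if it has such a labeling. *)

From mathcomp Require Import all_boot all_order all_algebra.
Set Implicit Arguments. Unset Strict Implicit. Unset Printing Implicit Defensive.
Import Order.TTheory GRing.Theory Num.Theory.

Definition cycle_adj (m : nat) : rel 'I_m :=
  fun i j => (val j == (val i).+1 %% m) || (val i == (val j).+1 %% m).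

Definition strict_prime_kpow_labeling (T : finType) (adj : rel T) (k : nat)
  (L : T -> int) : Prop :=
  injective L /\
  forall u v, adj u v -> exists p : nat, prime p /\ `|L u - L v|%N = (p ^ k)%N.

Definition strict_prime_kpow_graph (T : finType) (adj : rel T) (k : nat) : Prop :=
  exists L : T -> int, strict_prime_kpow_labeling adj k L.

From mathcomp Require Import all_boot all_order all_algebra.
From mathcomp Require Import zify.
Import Order.TTheory GRing.Theory Num.Theory.

(* Walk around C_(2n) with step a on the lattice a*Z, out to (n-1)*a, then jump
   by b to the shifted lattice a*Z + b and walk back down to b, from where a
   final jump of b closes the cycle at 0.  With a = 2^k and b = 3^k every edge
   has length a prime k-th power, and the two lattices are disjoint because the
   labels of the first half are even and those of the second half odd.  Adding
   a constant to all labels changes no distance, so the labels can be made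
   larger than any bound.  The construction works for every n. *)

Lemma strict_prime_kpow_labelingD (T : finType) (adj : rel T) (k : nat)
    (L : T -> int) (c : int) :
  strict_prime_kpow_labeling adj k L ->
  strict_prime_kpow_labeling adj k (fun v => (c + L v)%R).
Proof.
move=> [L_inj L_edge]; split; first by move=> u v /addrI /L_inj.
by move=> u v /L_edge; rewrite opprD addrACA subrr add0r.
Qed.

Lemma cycle_labeling_succ (m k : nat) (L : 'I_m -> int) :
  injective L ->
  (forall u v : 'I_m, val v = (val u).+1 %% m ->
     exists p : nat, prime p /\ `|L u - L v|%N = (p ^ k)%N) ->
  strict_prime_kpow_labeling (@cycle_adj m) k L.
Proof.
move=> L_inj L_succ; split=> // u v /orP[/eqP /L_succ // | /eqP /L_succ].
by rewrite -abszN opprB.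
Qed.

Definition cycle_label (a b n i : nat) : nat :=
  if (i < n)%N then i * a else ((2 * n).-1 - i) * a + b.

Lemma cycle_label_succ (a b : nat) {n i : nat} : (i < 2 * n)%N ->
  let d := `|Posz (cycle_label a b n i)
             - Posz (cycle_label a b n (i.+1 %% (2 * n)))|%N in
  d = a \/ d = b.
Proof.
move=> lt_i_2n /=; rewrite /cycle_label.
have [lt_i1_2n | le_2n_i1] := ltnP i.+1 (2 * n).
- rewrite modn_small //; case: ifP => lt_i_n; case: ifP => lt_i1_n.
  + by left; rewrite mulSn; lia.
  + right; have -> : ((2 * n).-1 - i.+1 = i)%N by lia.
    lia.
  + lia.
  + left; have -> : ((2 * n).-1 - i = ((2 * n).-1 - i.+1).+1)%N by lia.
    by rewrite mulSn; lia.
- have -> : i.+1 = (2 * n)%N by lia.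
  rewrite modnn; right; have -> : ((2 * n).-1 - i = 0)%N by lia.
  by case: ifP; case: ifP; lia.
Qed.

Lemma cycle_label_inj (a b n : nat) : (0 < a)%N -> ~~ odd a -> odd b ->
  injective (fun i : 'I_(2 * n) => cycle_label a b n i).
Proof.
move=> a_gt0 a_even b_odd [i lt_i_2n] [j lt_j_2n] /=.
rewrite /cycle_label => eq_ij; apply: val_inj => /=; move: eq_ij.
have even_neq_odd x y : (x * a)%N <> (y * a + b)%N.
  by move=> /(congr1 odd); rewrite oddD !oddM (negbTE a_even) b_odd !andbF.
case: ifP => lt_i_n; case: ifP => lt_j_n.
- by move/eqP; rewrite eqn_pmul2r // => /eqP.
- by move/even_neq_odd.
- by move/esym/even_neq_odd.
- by move/addIn/eqP; rewrite eqn_pmul2r // => /eqP; lia.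
Qed.

Definition cycle_kpow_label (k n : nat) (i : 'I_(2 * n)) : int :=
  Posz (cycle_label (2 ^ k) (3 ^ k) n i).

Lemma cycle_kpow_labelP (k n : nat) : (0 < k)%N ->
  strict_prime_kpow_labeling (@cycle_adj (2 * n)) k (cycle_kpow_label k n).
Proof.
move=> k_gt0; apply: cycle_labeling_succ.
  move=> u v /eqP; rewrite eqz_nat => /eqP; apply: cycle_label_inj.
  - by rewrite expn_gt0.
  - by rewrite oddX negb_or /= -lt0n k_gt0.
  - by rewrite oddX orbT.
move=> u v; rewrite /cycle_kpow_label => ->.
case: (cycle_label_succ (2 ^ k) (3 ^ k) (ltn_ord u)) => ->.
- by exists 2.
- by exists 3.
Qed.

Theorem mainTheorem12 (k n : nat) (hk : (0 < k)%N) (hn : (2 <= n)%N) :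
  strict_prime_kpow_graph (@cycle_adj (2 * n)) k /\
  (forall M : int, exists L : 'I_(2 * n) -> int,
      strict_prime_kpow_labeling (@cycle_adj (2 * n)) k L /\
      (forall v, (M < L v)%R)).
Proof.
have labeling := cycle_kpow_labelP k n hk.
split; first by exists (cycle_kpow_label k n).
move=> M; exists (fun i => M + 1 + cycle_kpow_label k n i)%R.
split; first exact: strict_prime_kpow_labelingD.
by move=> v; rewrite /cycle_kpow_label; lia.
Qed.
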